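(* For integers $n,k\geqslant 1$, let $\mathfrak{C}_{n,k}$ be the set of words $\omega=(\omega_1,\dots,\omega_n)$ of length $n$ on the alphabet $\{1,\dots,k\}$ that avoid both patterns $010$ and $000$, contain every letter of $\{1,\dots,k\}$, and satisfy $\omega_1=k$; let $\mathfrak{c}_{n,k}=\#\mathfrak{C}_{n,k}$, with $\mathfrak{c}_{0,k}=0$ for $k\geqslant1$. Then for all $n,k\geqslant 2$, $$\mathfrak{c}_{n,k}=(n-1)\,\mathfrak{c}_{n-1,k-1}+(n-2)\,\mathfrak{c}_{n-2,k-1}.$$
   Context: A word contains a pattern $p$ if some subsequence of it is order-isomorphic to $p$; otherwise it avoids $p$. Avoiding $010$ means no $i<j<l$ with $\omega_i=\omega_l<\omega_j$; avoiding $000$ means no letter occurs three or more times. *)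

From mathcomp Require Import all_boot.
Set Implicit Arguments. Unset Strict Implicit. Unset Printing Implicit Defensive.

(* A word of length n over {1,...,k} is an n.-tuple over 'I_k;
   letter a+1 of the paper is encoded by the ordinal a. *)

Definition contains010 n k (w : n.-tuple 'I_k) : bool :=
  [exists i : 'I_n, exists j : 'I_n, exists l : 'I_n,
     [&& i < j, j < l, tnth w i == tnth w l & tnth w i < tnth w j]].

Definition contains000 n k (w : n.-tuple 'I_k) : bool :=
  [exists i : 'I_n, exists j : 'I_n, exists l : 'I_n,
     [&& i < j, j < l, tnth w i == tnth w j & tnth w j == tnth w l]].

Definition surjective_word n k (w : n.-tuple 'I_k) : bool :=
  [forall a : 'I_k, a \in w].

(* first letter equals k (the largest letter, encoded k-1); requires n >= 1 *)
Definition starts_with_max n k (w : n.-tuple 'I_k) : bool :=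
  [exists i : 'I_n, (val i == 0) && (val (tnth w i) == k.-1)].

Definition C_set n k : {set n.-tuple 'I_k} :=
  [set w | [&& ~~ contains010 w, ~~ contains000 w,
              surjective_word w & starts_with_max w]].

Definition c_num n k : nat := #|C_set n k|.

From mathcomp Require Import all_boot zify.
Set Implicit Arguments. Unset Strict Implicit. Unset Printing Implicit Defensive.

(* Letters are the ordinals 0..k-1, so the smallest letter is 0 and the
   word must start with k-1.  Avoiding both 010 and 000 amounts to having no
   subsequence  a b a  with  a <= b.  Hence, when k >= 2, the letter 0 occurs
   once or twice, its occurrences are adjacent, and it does not occur first.
   Deleting this block of zeros and lowering the other letters by one gives a
   word of C(n-1,k-1) or C(n-2,k-1); conversely, a block of one or two zeros
   can be inserted after any of the first q letters of the lift of such a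
   word, with q ranging over 1..n-1, resp. 1..n-2. *)

Lemma subseq_consP (T : eqType) (x0 x : T) t s :
  subseq (x :: t) s <->
  exists i, [/\ i < size s, nth x0 s i = x & subseq t (drop i.+1 s)].
Proof.
elim: s => [|y s IH] /=; first by split=> // -[i []].
split.
  case: eqP => [<- sub_t | _ /IH [i [lt_i nth_i sub_t]]].
    by exists 0; rewrite drop0.
  by exists i.+1.
move=> [[|i] [/= lt_i nth_i sub_t]].
  by rewrite nth_i eqxx; rewrite drop0 in sub_t.
have sub_xt : subseq (x :: t) s by apply/IH; exists i.
by case: eqP => // _; exact: subseq_trans (subseq_cons t x) sub_xt.
Qed.

Lemma subseq3P (T : eqType) (x0 x y z : T) s :
  subseq [:: x; y; z] s <->
  exists i j l, [/\ i < j, j < l, l < size s &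
                  [/\ nth x0 s i = x, nth x0 s j = y & nth x0 s l = z]].
Proof.
split.
  move=> /(subseq_consP x0) [i [lt_i nth_i /(subseq_consP x0) [j [lt_j nth_j]]]].
  move=> /(subseq_consP x0) [l [lt_l nth_l _]].
  rewrite size_drop in lt_j; rewrite nth_drop in nth_j.
  rewrite drop_drop size_drop in lt_l; rewrite drop_drop nth_drop in nth_l.
  exists i, (i.+1 + j), (j.+1 + i.+1 + l); split=> //; lia.
move=> [i [j [l [lt_ij lt_jl lt_l [nth_i nth_j nth_l]]]]].
apply/(subseq_consP x0); exists i; split=> //; first lia.
apply/(subseq_consP x0); exists (j - i.+1).
rewrite size_drop nth_drop (_ : i.+1 + (j - i.+1) = j); last lia.
split=> //; first lia.
apply/(subseq_consP x0); exists (l - j.+1).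
rewrite !drop_drop size_drop nth_drop (_ : (j - i.+1).+1 + i.+1 = j.+1); last lia.
rewrite (_ : j.+1 + (l - j.+1) = l); last lia.
split=> //; [lia | exact: sub0seq].
Qed.

Definition aba_free (s : seq nat) : Prop :=
  forall a b, a <= b -> ~~ subseq [:: a; b; a] s.

Definition Cword k (s : seq nat) : Prop :=
  [/\ all (fun x => x < k) s, aba_free s,
      forall a, a < k -> a \in s & ohead s = Some k.-1].

Definition letters n k (w : n.-tuple 'I_k) : seq nat := map val w.

Lemma size_letters n k (w : n.-tuple 'I_k) : size (letters w) = n.
Proof. by rewrite size_map size_tuple. Qed.

Lemma letters_inj n k : injective (@letters n k).
Proof. by move=> w1 w2 /(inj_map val_inj)/val_inj. Qed.

Lemma nth_letters n k (w : n.-tuple 'I_k) (i : 'I_n) :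
  nth 0 (letters w) i = tnth w i.
Proof. by rewrite (nth_map (tnth w i)) ?size_tuple // -tnth_nth. Qed.

Lemma subseq3_lettersP n k (w : n.-tuple 'I_k) x y z :
  subseq [:: x; y; z] (letters w) <->
  exists i j l : 'I_n, [/\ i < j, j < l &
    [/\ tnth w i = x :> nat, tnth w j = y :> nat & tnth w l = z :> nat]].
Proof.
rewrite (subseq3P 0) size_letters; split.
  move=> [i [j [l [lt_ij lt_jl lt_l [wi wj wl]]]]].
  have lt_i : i < n by lia.
  have lt_j : j < n by lia.
  exists (Ordinal lt_i), (Ordinal lt_j), (Ordinal lt_l).
  by rewrite -!nth_letters.
move=> [i [j [l [lt_ij lt_jl [wi wj wl]]]]].
by exists i, j, l; rewrite !nth_letters.
Qed.

Lemma aba_free_letters n k (w : n.-tuple 'I_k) :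
  ~~ contains010 w /\ ~~ contains000 w <-> aba_free (letters w).
Proof.
split.
  move=> [/existsP no010 /existsP no000] a b le_ab.
  apply/negP => /subseq3_lettersP [i [j [l [lt_ij lt_jl [wi wj wl]]]]].
  move: le_ab; rewrite leq_eqVlt => /orP [/eqP eq_ab | lt_ab].
  - apply: no000; exists i; apply/existsP; exists j; apply/existsP; exists l.
    by rewrite lt_ij lt_jl -!val_eqE /= wi wj wl eq_ab !eqxx.
  - apply: no010; exists i; apply/existsP; exists j; apply/existsP; exists l.
    by rewrite lt_ij lt_jl -!val_eqE /= wi wj wl eqxx lt_ab.
move=> free; split; apply/existsP => -[i /existsP [j /existsP [l]]].
  move=> /and4P [lt_ij lt_jl /eqP w_il lt_w].
  apply: (negP (free _ _ (ltnW lt_w))); apply/subseq3_lettersP.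
  by exists i, j, l; rewrite w_il.
move=> /and4P [lt_ij lt_jl /eqP w_ij /eqP w_jl].
apply: (negP (free (tnth w i) (tnth w i) (leqnn _))); apply/subseq3_lettersP.
by exists i, j, l; rewrite -w_jl -w_ij.
Qed.

Lemma surjective_letters n k (w : n.-tuple 'I_k) :
  surjective_word w <-> forall a, a < k -> a \in letters w.
Proof.
split=> [/forallP surj a lt_a | surj].
  by have := map_f val (surj (Ordinal lt_a)).
by apply/forallP => a; have := surj a (ltn_ord a); rewrite (mem_map val_inj).
Qed.

Lemma starts_with_max_letters n k (w : n.-tuple 'I_k) :
  starts_with_max w <-> ohead (letters w) = Some k.-1.
Proof.
split.
  move=> /existsP [i /andP [/eqP i0 /eqP wi]].
  have := nth_letters w i; rewrite i0 wi.
  case E: (letters w) => [|x t] /=; last by move=> ->.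
  by have := size_letters w; rewrite E => n0; move: (ltn_ord i); rewrite i0 -n0.
case E: (letters w) => [|x t] //= [x_max].
have n_pos : 0 < n by rewrite -(size_letters w) E.
apply/existsP; exists (Ordinal n_pos); rewrite /= -nth_letters E /=.
by rewrite x_max.
Qed.

Lemma mem_C n k (w : n.-tuple 'I_k) : w \in C_set n k <-> Cword k (letters w).
Proof.
rewrite inE; split.
  move=> /and4P [no010 no000 surj head]; split.
  - by apply/allP => x /mapP [y _ ->]; exact: ltn_ord.
  - exact/aba_free_letters.
  - exact/surjective_letters.
  - exact/starts_with_max_letters.
move=> [_ /aba_free_letters [-> ->] /surjective_letters surj /starts_with_max_letters head].
by rewrite surj head.
Qed.

Lemma map_succ_pred (t : seq nat) : 0 \notin t -> map succn (map predn t) = t.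
Proof.
move=> t_pos; rewrite -map_comp map_id_in // => x x_t /=.
by rewrite prednK // lt0n; apply: contraNneq t_pos => <-.
Qed.

Lemma zero_notin_lift (u : seq nat) : 0 \notin map succn u.
Proof. by apply/mapP => -[]. Qed.

Lemma subseq_map_succ (s t : seq nat) : subseq (map succn s) (map succn t) = subseq s t.
Proof.
apply/idP/idP => [/(map_subseq predn) | /(map_subseq succn)] //.
by rewrite -!map_comp !map_id.
Qed.

Lemma subseq_cons_catl (T : eqType) (x : T) t L s :
  x \notin L -> subseq (x :: t) (L ++ s) = subseq (x :: t) s.
Proof.
elim: L => [//|y L IH] /=; rewrite inE negb_or => /andP [ne_xy x_L].
by rewrite (negbTE ne_xy) IH.
Qed.

Section Lift.

Variables (m : nat) (L R u : seq nat).
Hypotheses (m_small : 0 < m <= 2) (L_nonempty : L != [::])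
           (LR_lift : L ++ R = map succn u).

Let s := L ++ nseq m 0 ++ R.

Lemma mem_lift x : (x \in s) = (x == 0) || (x \in map succn u).
Proof.
have m_pos : 0 < m by case/andP: m_small.
by rewrite -LR_lift !mem_cat mem_nseq m_pos orbCA.
Qed.

Lemma lift_parts_pos : 0 \notin L ++ R.
Proof. by rewrite LR_lift zero_notin_lift. Qed.

Lemma subseq_lift t : 0 \notin t -> subseq t s = subseq (map predn t) u.
Proof.
move=> t_pos; rewrite -[RHS]subseq_map_succ map_succ_pred // -LR_lift.
have -> : L ++ R = filter (fun x => x != 0) s.
  rewrite !filter_cat filter_nseq /= -filter_cat; apply/esym/all_filterP.
  by apply/allP => x x_LR; apply: contraNneq lift_parts_pos => <-.
have t_nz : all (fun x => x != 0) t.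
  by apply/allP => x x_t; apply: contraNneq t_pos => <-.
by rewrite subseq_filter t_nz.
Qed.

(* A block of at most two zeros creates no pattern 0 b 0. *)
Lemma no_zero_pattern_lift b : ~~ subseq [:: 0; b; 0] s.
Proof.
have [L_pos R_pos] : 0 \notin L /\ 0 \notin R.
  by move: lift_parts_pos; rewrite mem_cat negb_or => /andP.
rewrite /s subseq_cons_catl //.
by case/andP: m_small; case: m => [|[|[|]]] // _ _; case: b => [|b] /=;
  apply/negP => /mem_subseq sub; move: R_pos; rewrite sub // !inE eqxx ?orbT.
Qed.

Lemma Cword_lift k : Cword k.+1 s <-> Cword k u.
Proof.
have lt_lift : all (fun x => x < k.+1) s = all (fun x => x < k) u.
  rewrite /s !all_cat all_nseq ltn0Sn orbT andTb -all_cat LR_lift all_map.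
  exact: eq_all.
have head_lift : ohead s = ohead (map succn u).
  by rewrite -LR_lift /s; case: (L) L_nonempty.
split=> [[lt_s free_s surj_s head_s] | [lt_u free_u surj_u head_u]]; split.
- by rewrite -lt_lift.
- move=> a b le_ab; apply/negP => sub; apply: (negP (free_s a.+1 b.+1 le_ab)).
  by rewrite subseq_lift.
- by move=> a lt_a; have := surj_s a.+1 lt_a; rewrite mem_lift (mem_map succn_inj).
- by move: head_s; rewrite head_lift; case: (u) => //= x _ [<-].
- by rewrite lt_lift.
- move=> [|a] [|b] le_ab; rewrite ?no_zero_pattern_lift // subseq_lift //.
  exact: free_u.
- move=> [|a] lt_a; rewrite mem_lift //.
  by rewrite (mem_map succn_inj) surj_u.
- move: head_u lt_u; rewrite head_lift; case: (u) => //= x t [->] /andP [lt_x _].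
  by rewrite prednK //; lia.
Qed.

End Lift.

Lemma zero_block s : aba_free s -> 0 \in s ->
  exists L m R, [/\ 0 < m <= 2, 0 \notin L ++ R & s = L ++ nseq m 0 ++ R].
Proof.
move=> free s0.
have {s0} [L [t [L_pos s_eq]]] : exists L t, 0 \notin L /\ s = L ++ 0 :: t.
  move: s0; rewrite -has_pred1 => /split_find [_ L t /eqP -> L_pos].
  by exists L, t; rewrite cat_rcons has_pred1 in L_pos *.
subst s.
have after_first_zero t' : subseq (0 :: t') (L ++ 0 :: t) = subseq t' t.
  by rewrite subseq_cons_catl //= eqxx.
case t_pos: (0 \in t); last first.
  by exists L, 1, t; rewrite mem_cat negb_or L_pos t_pos.
case: t t_pos free after_first_zero => [//|b t]; rewrite inE => t0 free after.
have b0 : b = 0.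
  apply/eqP; apply: contraTT (free 0 b (leq0n b)) => nz_b.
  by rewrite negbK after /= eqxx sub1seq; rewrite eq_sym (negbTE nz_b) in t0.
subst b; exists L, 2, t; split=> //.
have := free 0 0 (leqnn 0); rewrite after /= ?eqxx sub1seq => t_pos.
by rewrite mem_cat negb_or L_pos t_pos.
Qed.

Definition ins m q (u : seq nat) : seq nat :=
  take q (map succn u) ++ nseq m 0 ++ drop q (map succn u).

Lemma Cword_ins k m q u : 0 < m <= 2 -> 0 < q <= size u ->
  Cword k.+1 (ins m q u) <-> Cword k u.
Proof.
move=> m_small /andP [q_pos le_q]; apply: Cword_lift => //; last exact: cat_take_drop.
by rewrite -size_eq0 size_takel ?size_map // -lt0n.
Qed.

Lemma size_ins m q u : size (ins m q u) = size u + m.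
Proof.
by rewrite /ins !size_cat size_nseq addnCA -size_cat cat_take_drop size_map addnC.
Qed.

Lemma count0_ins m q u : count_mem 0 (ins m q u) = m.
Proof.
rewrite /ins !count_cat count_nseq /= mul1n addnCA -count_cat cat_take_drop.
by rewrite (count_memPn (zero_notin_lift u)) addn0.
Qed.

(* The position (index of the first zero) and u (the nonzero letters,
   lowered) can be read off the result of an insertion. *)
Lemma ins_inj m q q' u u' : 0 < m -> q <= size u -> q' <= size u' ->
  ins m q u = ins m q' u' -> q = q' /\ u = u'.
Proof.
move=> m_pos le_q le_q'.
have index_ins v p : p <= size v -> index 0 (ins m p v) = p.
  move=> le_p; have take_pos : 0 \notin take p (map succn v).
    exact: contra (@mem_take _ _ _ _) (zero_notin_lift v).
  rewrite /ins index_cat (negbTE take_pos) size_takel ?size_map //.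
  by case: (m) m_pos => //= m1 _; rewrite addn0.
have filter_ins v p : filter (fun x => x != 0) (ins m p v) = map succn v.
  rewrite /ins !filter_cat filter_nseq /= -filter_cat cat_take_drop.
  by apply/all_filterP/allP => _ /mapP [x _ ->].
move=> eq_ins; split; first by rewrite -(index_ins u q) // -(index_ins u' q') // eq_ins.
by apply: (inj_map succn_inj); rewrite -(filter_ins u q) -(filter_ins u' q') eq_ins.
Qed.

(* Every word of C(_, k+2) is obtained by an insertion: its zeros form a
   block of length one or two that is not at the front. *)
Lemma Cword_decomp k s : Cword k.+2 s ->
  exists m q u, [/\ 0 < m <= 2, 0 < q <= size u & s = ins m q u].
Proof.
move=> [_ free surj head].
have [L [m [R [m_small lift_parts_pos s_eq]]]] := zero_block free (surj 0 isT).
have L_pos : 0 < size L.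
  by move: head; rewrite s_eq; case: L {s_eq lift_parts_pos} => //; case: m m_small.
exists m, (size L), (map predn (L ++ R)); split=> //.
  by rewrite L_pos size_map size_cat leq_addr.
by rewrite /ins map_succ_pred // take_size_cat // drop_size_cat.
Qed.

Definition tuple_of_seq n k (s : seq nat) : n.-tuple 'I_k.+1 :=
  [tuple inord (nth 0 s i) | i < n].

Lemma letters_tuple_of_seq n k s : size s = n -> all (fun x => x < k.+1) s ->
  letters (tuple_of_seq n k s) = s.
Proof.
move=> size_s lt_s; apply: (eq_from_nth (x0 := 0)); first by rewrite size_letters.
move=> i; rewrite size_letters => lt_i.
rewrite (nth_letters _ (Ordinal lt_i)) tnth_mktuple inordK //.
by apply: (allP lt_s); rewrite mem_nth // size_s.
Qed.

(* Counting the words of C(N, k+2), N = p + m, with exactly m zeros (m = 1, 2):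
   they are in bijection with the pairs (u, i) of a word u of C(p, k+1) and
   a position i < p, by inserting m zeros after the first i+1 letters. *)
Section ZeroBlockCount.

Variables (k m p N : nat).
Hypotheses (m_small : 0 < m <= 2) (N_eq : N = p + m).

Definition insert_zeros (x : p.-tuple 'I_k.+1 * 'I_p) : N.-tuple 'I_k.+2 :=
  tuple_of_seq N k.+1 (ins m x.2.+1 (letters x.1)).

Lemma ins_position (u : p.-tuple 'I_k.+1) (i : 'I_p) : 0 < i.+1 <= size (letters u).
Proof. by rewrite size_letters ltn_ord. Qed.

Lemma Cword_insert_zeros (u : p.-tuple 'I_k.+1) (i : 'I_p) : u \in C_set p k.+1 ->
  Cword k.+2 (ins m i.+1 (letters u)).
Proof. by move=> /mem_C; apply: (iffRL (Cword_ins k.+1 m_small (ins_position u i))). Qed.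

Lemma letters_insert_zeros (u : p.-tuple 'I_k.+1) (i : 'I_p) : u \in C_set p k.+1 ->
  letters (insert_zeros (u, i)) = ins m i.+1 (letters u).
Proof.
move=> u_C; apply: letters_tuple_of_seq; first by rewrite size_ins size_letters.
by case: (Cword_insert_zeros i u_C).
Qed.

Lemma insert_zeros_inj : {in setX (C_set p k.+1) setT &, injective insert_zeros}.
Proof.
have m_pos : 0 < m by case/andP: m_small.
move=> [u i] [u' i'] /setXP [u_C _] /setXP [u'_C _] /(congr1 (@letters _ _)).
rewrite !letters_insert_zeros // => /ins_inj [] //; rewrite ?size_letters //.
by move=> [/val_inj ->] /letters_inj ->.
Qed.

Lemma image_insert_zeros :
  [set w in C_set N k.+2 | count_mem 0 (letters w) == m] =
  insert_zeros @: setX (C_set p k.+1) setT.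
Proof.
apply/setP => w; rewrite inE; apply/andP/imsetP.
  move=> [/mem_C w_C /eqP count_w].
  have [m' [q [u [_ range_q w_eq]]]] := Cword_decomp w_C.
  have m'_eq : m' = m by rewrite -count_w w_eq count0_ins.
  subst m'.
  have size_u : size u = p.
    by move: (size_letters w); rewrite w_eq size_ins N_eq => /addIn.
  have u_C : Cword k.+1 u by apply/(Cword_ins k.+1 m_small range_q); rewrite -w_eq.
  have [q_pos le_q] := andP range_q.
  have lt_q : q.-1 < p by rewrite -size_u prednK.
  have t_C : tuple_of_seq p k u \in C_set p k.+1.
    by apply/mem_C; rewrite letters_tuple_of_seq //; case: u_C.
  exists (tuple_of_seq p k u, Ordinal lt_q); first by rewrite in_setX in_setT andbT.
  apply: letters_inj; rewrite letters_insert_zeros //= prednK //.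
  by rewrite letters_tuple_of_seq //; case: u_C.
move=> [[u i] /setXP [u_C _] ->].
rewrite letters_insert_zeros // count0_ins; split=> //.
by apply/mem_C; rewrite letters_insert_zeros //; exact: Cword_insert_zeros.
Qed.

Lemma card_zero_block :
  #|[set w in C_set N k.+2 | count_mem 0 (letters w) == m]| = p * c_num p k.+1.
Proof.
rewrite image_insert_zeros card_in_imset; last exact: insert_zeros_inj.
by rewrite cardsX cardsT card_ord mulnC.
Qed.

End ZeroBlockCount.

(* Every word of C(N, k+2) has one or two zeros. *)
Lemma c_num_split N k : c_num N k.+2 =
  #|[set w in C_set N k.+2 | count_mem 0 (letters w) == 1]| +
  #|[set w in C_set N k.+2 | count_mem 0 (letters w) == 2]|.
Proof.
rewrite /c_num !setIdE -(cardsID [set w | count_mem 0 (letters w) == 1]).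
congr (_ + _); apply: eq_card => w; rewrite setDE !in_setI.
case w_C: (w \in C_set N k.+2) => //=; rewrite !inE.
have [m [q [u [m_small _ ->]]]] := Cword_decomp (iffLR (mem_C w) w_C).
by rewrite count0_ins; case: m m_small => [|[|[|]]].
Qed.

Theorem mainTheorem3 (n k : nat) : 2 <= n -> 2 <= k ->
  c_num n k = (n - 1) * c_num (n - 1) (k - 1) + (n - 2) * c_num (n - 2) (k - 1).
Proof.
case: n => [|[|n]] //; case: k => [|[|k]] // _ _.
rewrite !subSS !subn0 c_num_split.
by rewrite (@card_zero_block k 1 n.+1) ?addn1 // (@card_zero_block k 2 n) ?addn2.
Qed.
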